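(* For all positive integers $\beta,p$, the transition matrix $A_{\beta,p}$ is irreducible.
   Context: Let $\beta,p$ be positive integers. Let $S_{\beta,p}=\{\mathbf{s}\in\{0,1\}^{\beta-1}: wt(\mathbf{s})\le p\}$, where $wt$ is Hamming weight, let $M=\sum_{i=0}^p\binom{\beta-1}{i}=|S_{\beta,p}|$, and fix an ordering $\mathbf{s}_1,\ldots,\mathbf{s}_M$ of $S_{\beta,p}$. The merge of two vectors $\mathbf{u},\mathbf{v}\in\{0,1\}^{\beta-1}$ is $f(\mathbf{u},\mathbf{v})=\mathbf{u}$ concatenated with the last bit of $\mathbf{v}$ (a vector of length $\beta$) if the last $\beta-2$ bits of $\mathbf{u}$ equal the first $\beta-2$ bits of $\mathbf{v}$, and $f(\mathbf{u},\mathbf{v})=\mathbf{F}$ (failure) otherwise. The transition matrix $A_{\beta,p}=(a_{i,j})\in\{0,1\}^{M\times M}$ has $a_{i,j}=1$ if $f(\mathbf{s}_i,\mathbf{s}_j)\neq\mathbf{F}$ and $wt(f(\mathbf{s}_i,\mathbf{s}_j))\le p$, and $a_{i,j}=0$ otherwise. A matrix $A\in\{0,1\}^{M\times M}$ is irreducible if for all $1\le i,j\le M$ there is an integer $k\ge 0$ (possibly depending on $i,j$) with $(A^k)_{i,j}>0$. *)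

From mathcomp Require Import all_boot all_algebra.
Set Implicit Arguments. Unset Strict Implicit. Unset Printing Implicit Defensive.
Local Open Scope ring_scope.

Definition wt (s : seq bool) : nat := count id s.

(* merge f(u,v): u ++ [last bit of v] if the last beta-2 bits of u equal the
   first beta-2 bits of v; None encodes the failure symbol F.
   For vectors of length beta-1, the last beta-2 bits of u are
   drop ((beta-1)-(beta-2)) u. *)
Definition merge (beta : nat) (u v : seq bool) : option (seq bool) :=
  if drop (beta.-1 - beta.-2)%N u == take beta.-2 v
  then Some (rcons u (last false v)) else None.

Definition Mcard (beta p : nat) : nat := (\sum_(i < p.+1) 'C(beta.-1, i))%N.

Definition is_ordering (beta p : nat)
  (s : 'I_(Mcard beta p) -> beta.-1.-tuple bool) : Prop :=
  injective s /\ (forall i, (wt (s i) <= p)%N) /\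
  (forall t : beta.-1.-tuple bool, (wt t <= p)%N -> exists i, s i = t).

Definition trans_mx (beta p : nat)
  (s : 'I_(Mcard beta p) -> beta.-1.-tuple bool) : 'M[nat]_(Mcard beta p) :=
  \matrix_(i, j) (match merge beta (s i) (s j) with
                  | Some w => (wt w <= p)%N
                  | None => false end : nat).

Definition mxpow (n : nat) (A : 'M[nat]_n) (k : nat) : 'M[nat]_n :=
  iter k (fun B => B *m A) 1%:M.

Definition irreducible_mx (n : nat) (A : 'M[nat]_n) : Prop :=
  forall i j : 'I_n, exists k : nat, (0 < mxpow A k i j)%N.

From Pilot Require Import Defs.
From mathcomp Require Import all_boot all_algebra.

(* The graph of A_{beta,p} is the de Bruijn-type shift graph on the words of
   weight at most p: the edge u -> v exists exactly when v is u shifted left by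
   one bit and the length-beta window u ++ [last bit of v] has weight <= p.
   Shifting the bits 0,...,0 into a word never raises any window weight, so every
   word reaches the zero word; shifting the bits of v into the zero word keeps
   every window inside a prefix of v, so the zero word reaches every word v. *)

Definition mx_reach {n : nat} (A : 'M[nat]_n) (i j : 'I_n) : Prop :=
  exists k, (0 < mxpow A k i j)%N.

Lemma mx_reach_refl {n : nat} (A : 'M[nat]_n) i : mx_reach A i i.
Proof. by exists 0%N; rewrite /mxpow /= mxE eqxx. Qed.

Lemma mx_reach_step {n : nat} {A : 'M[nat]_n} {i l j} :
  mx_reach A i l -> (0 < A l j)%N -> mx_reach A i j.
Proof.
move=> [k Akil] Alj; exists k.+1.
rewrite /mxpow iterS -/(mxpow A k) mxE (bigD1 l) //=.
by rewrite (leq_trans _ (leq_addr _ _)) // muln_gt0 Akil.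
Qed.

Lemma wt_cat (u v : seq bool) : wt (u ++ v) = (wt u + wt v)%N.
Proof. exact: count_cat. Qed.

Lemma wt_rcons (u : seq bool) (b : bool) : wt (rcons u b) = (wt u + b)%N.
Proof. by rewrite -cats1 wt_cat /wt /= addn0. Qed.

Lemma wt_nseq_false (k : nat) : wt (nseq k false) = 0%N.
Proof. by rewrite /wt count_nseq. Qed.

Lemma wt_drop (k : nat) (u : seq bool) : (wt (drop k u) <= wt u)%N.
Proof. by rewrite -{2}(cat_take_drop k u) wt_cat leq_addl. Qed.

Lemma wt_take (k : nat) (u : seq bool) : (wt (take k u) <= wt u)%N.
Proof. by rewrite -{2}(cat_take_drop k u) wt_cat leq_addr. Qed.

Lemma merge_shift (beta : nat) (u : seq bool) (b : bool) :
  size u = beta.-1 -> (0 < size u)%N ->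
  Defs.merge beta u (rcons (behead u) b) = Some (rcons u b).
Proof.
case: u => // x u /= size_u _; rewrite /Defs.merge -size_u /=.
by rewrite last_rcons subSnn drop1 -cats1 take_size_cat // eqxx.
Qed.

Section ShiftGraph.
Variables (beta p : nat) (s : 'I_(Mcard beta p) -> beta.-1.-tuple bool).
Hypothesis s_ordering : is_ordering s.

Let m := beta.-1.

Definition words_reach (u v : seq bool) : Prop :=
  forall i j, s i = u :> seq bool -> s j = v :> seq bool ->
  mx_reach (trans_mx s) i j.

Lemma ordering_onto {w : seq bool} :
  size w = m -> (wt w <= p)%N -> exists l, s l = w :> seq bool.
Proof.
move=> /eqP size_w wt_w; have [_ [_ onto]] := s_ordering.
by have [l sl] := onto (Tuple size_w) wt_w; exists l; rewrite sl.
Qed.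

Lemma words_reach_refl (u : seq bool) : words_reach u u.
Proof.
move=> i j si sj; have [s_inj _] := s_ordering.
have -> : i = j by apply: s_inj; apply: val_inj; rewrite /= si sj.
exact: mx_reach_refl.
Qed.

Lemma words_reach_shift {u w : seq bool} (b : bool) :
  words_reach u w -> size w = m -> (0 < size w)%N -> (wt w + b <= p)%N ->
  words_reach u (rcons (behead w) b).
Proof.
move=> reach_uw size_w w_gt0 wt_wb i j si sj.
have [l sl] := ordering_onto size_w (leq_trans (leq_addr _ _) wt_wb).
apply: (mx_reach_step (reach_uw i l si sl)).
by rewrite mxE sl sj merge_shift // wt_rcons wt_wb.
Qed.

(* After k shifts, w has become [drop k w ++ take k t]; the hypothesis bounds
   the weight of the merged window at each shift. *)
Lemma words_reach_shift_in {u w t : seq bool} :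
  words_reach u w -> size w = m -> size t = m ->
  (forall k, (k < m)%N -> (wt (drop k w ++ take k.+1 t) <= p)%N) ->
  words_reach u t.
Proof.
move=> reach_uw size_w size_t wt_window.
suff reach_k k : (k <= m)%N -> words_reach u (drop k w ++ take k t).
  have := reach_k m (leqnn m).
  by rewrite drop_oversize ?take_oversize ?size_w ?size_t.
elim: k => [_|k IHk lt_km]; first by rewrite drop0 take0 cats0.
have size_x : size (drop k w ++ take k t) = m.
  by rewrite size_cat size_drop size_take size_t lt_km size_w subnK // ltnW.
have wt_next : (wt (drop k w ++ take k t) + nth false t k <= p)%N.
  by rewrite -wt_rcons rcons_cat -take_nth ?size_t // wt_window.
have -> : drop k.+1 w ++ take k.+1 t
          = rcons (behead (drop k w ++ take k t)) (nth false t k).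
  by rewrite (drop_nth false (n := k)) ?size_w //= rcons_cat -take_nth ?size_t.
apply: (words_reach_shift _ (IHk (ltnW lt_km)) size_x _ wt_next).
by rewrite size_x (leq_ltn_trans (leq0n k) lt_km).
Qed.

Lemma trans_mx_irreducible : irreducible_mx (trans_mx s).
Proof.
move=> i j; have [_ [wt_s _]] := s_ordering.
have [size_i size_j] := (size_tuple (s i), size_tuple (s j)).
have reach_zero : words_reach (s i) (nseq m false).
  apply: (words_reach_shift_in (words_reach_refl (s i)) size_i (size_nseq _ _)).
  move=> k lt_km; rewrite take_nseq // wt_cat wt_nseq_false addn0.
  exact: leq_trans (wt_drop _ _) (wt_s i).
have reach_j : words_reach (s i) (s j).
  apply: (words_reach_shift_in reach_zero (size_nseq _ _) size_j) => k _.
  rewrite drop_nseq wt_cat wt_nseq_false.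
  exact: leq_trans (wt_take _ _) (wt_s j).
exact: reach_j.
Qed.

End ShiftGraph.

Theorem lemma1 (beta p : nat) : (0 < beta)%N -> (0 < p)%N ->
  forall s : 'I_(Mcard beta p) -> beta.-1.-tuple bool,
  is_ordering s -> irreducible_mx (trans_mx s).
Proof. by move=> _ _ s; apply: trans_mx_irreducible. Qed.
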